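(* Let $\lambda$ be a finite measure on $\mathcal M$ and $\mathcal R$ a symmetric recombination measure such that $(\mathcal R,\lambda)$ is shattering with constant $\alpha$. Then for all $k\ge1$, $$\int|\mathcal A|^{(\lambda)}_2\,d\mathcal R_k(\mathcal A)\le\frac{\alpha^*}{k+1},\qquad \alpha^*:=\lambda(\mathcal M)^2\vee 2\alpha\lambda(\mathcal M).$$
   Context: $\mathcal M$ is a complete separable metric space. $\mathcal R$ is the law of a random Borel set $R\subseteq\mathcal M$, symmetric in that $R$ and $R^c$ have the same law. $(\mathcal R,\lambda)$ is shattering with constant $\alpha>0$ if $\lambda(A)^3\le 2\alpha\int\lambda(A\cap R)\lambda(A\cap R^c)\,d\mathcal R(R)$ for all Borel $A$ (equivalently $\lambda(A)^3\le\alpha[\lambda(A)^2-2\int\lambda(A\cap R)^2\,d\mathcal R(R)]$). $\mathcal R_k$ is the law of the partition $\{R_1,R_1^c\}\wedge\cdots\wedge\{R_k,R_k^c\}$ (nonempty sets $\tilde R_1\cap\cdots\cap\tilde R_k$, $\tilde R_j\in\{R_j,R_j^c\}$) where $R_1,\dots,R_k$ are i.i.d. with law $\mathcal R$. For a finite partition $\mathcal A=\{A_1,\dots,A_N\}$, $|\mathcal A|^{(\lambda)}_r:=\sum_i\lambda(A_i)^r$. *)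

From HB Require Import structures.
From mathcomp Require Import all_boot all_order all_algebra.
From mathcomp Require Import all_classical all_reals all_analysis.
Set Implicit Arguments. Unset Strict Implicit. Unset Printing Implicit Defensive.
Import Order.TTheory GRing.Theory Num.Theory.
Local Open Scope classical_set_scope.
Local Open Scope ring_scope.

Definition separable_space (T : topologicalType) : Prop :=
  exists D : set T, countable D /\ closure D = setT.

Definition borel_of (T : topologicalType) := g_sigma_algebraType (@open T).

(* The partition {S_1,S_1^c} /\ ... /\ {S_k,S_k^c}: the nonempty sets
   S~_1 `&` ... `&` S~_k with S~_j in {S_j, ~` S_j}. *)
Definition cells (T : Type) (Ss : seq (set T)) : set (set T) :=
  [set C | C !=set0 /\ exists e : nat -> bool,
     C = \bigcap_(i in `I_(size Ss))
           (if e i then nth set0 Ss i else ~` nth set0 Ss i)].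

Definition norm2 {d} {T : measurableType d} {R : realType}
  (lam : set T -> \bar R) (P : set (set T)) : R :=
  \sum_(C \in P) (fine (lam C)) ^+ 2.

(* Iterated integral: with R_1,...,R_k i.i.d. copies of the random set RS
   (law P), Eiter k acc = E[ f (R_1 :: ... :: R_k :: acc) ].  In particular
   Eiter k [::] = \int |A|_2 dR_k(A). *)
Fixpoint Eiter {d dO} {T : measurableType d} {O : measurableType dO}
  {R : realType} (P : probability O R) (RS : O -> set T)
  (lam : set T -> \bar R) (k : nat) (acc : seq (set T)) : \bar R :=
  match k with
  | 0 => (norm2 lam (cells acc))%:E
  | k'.+1 => (\int[P]_w Eiter P RS lam k' (RS w :: acc))%E
  end.

(* Write [G] for the sum of the squared masses of the cells generated by
   [S_1, ..., S_j], and [Lam = lam M].  Refining a cell [C] by an independent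
   copy of [R] replaces [lam C ^+ 2] by
   [lam (C `&` R) ^+ 2 + lam (C `\` R) ^+ 2 = lam C ^+ 2 - 2 lam (C `&` R) lam (C `\` R)],
   whose mean is at most [lam C ^+ 2 - lam C ^+ 3 / alpha] by shattering.
   Summing over the cells and using [(sum lam C ^+ 2) ^+ 2 <= Lam * sum lam C ^+ 3]
   (Cauchy-Schwarz) shows that one refinement lowers the mean of [G] to at
   most [G - G ^+ 2 / c], with [c = alpha * Lam].  The map
   [psi_k x = c x / (c + k x)] is concave, increasing and satisfies
   [psi_k (x - x ^+ 2 / c) <= psi_(k+1) x], so by Jensen's inequality and
   induction [k] further refinements give mean at most [psi_k G].  Starting
   from [G = Lam ^+ 2] this is [c Lam ^+ 2 / (c + k Lam ^+ 2)], which is at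
   most [max (Lam ^+ 2) c / (k + 1)]. *)

From HB Require Import structures.
From mathcomp Require Import all_boot all_order all_algebra.
From mathcomp Require Import all_classical all_reals all_analysis.
From mathcomp Require Import measurable_realfun ring lra.
Set Implicit Arguments.
Unset Strict Implicit.
Unset Printing Implicit Defensive.
Import Order.TTheory GRing.Theory Num.Theory.
Local Open Scope classical_set_scope.
Local Open Scope ring_scope.

Section cell_sequence.
Context {T : Type}.

(* All [2 ^ size Ss] sign patterns, empty cells and repetitions included. *)
Fixpoint cellseq (Ss : seq (set T)) : seq (set T) :=
  if Ss is A :: Ss' then
    [seq C `&` A | C <- cellseq Ss'] ++ [seq C `&` ~` A | C <- cellseq Ss']
  else [:: setT].

Definition signed_cap (Ss : seq (set T)) (e : nat -> bool) : set T :=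
  \bigcap_(i in `I_(size Ss)) (if e i then nth set0 Ss i else ~` nth set0 Ss i).

Lemma signed_cap_cons A Ss e :
  signed_cap (A :: Ss) e =
  signed_cap Ss (fun i => e i.+1) `&` (if e 0%N then A else ~` A).
Proof.
apply/seteqP; split => [x Sx|x [Sx Sx0] [|i] /= ilt //].
  by split; [move=> i /= ilt; exact: (Sx i.+1)|exact: (Sx 0%N)].
exact: Sx.
Qed.

Lemma signed_cap_in_cellseq Ss e : signed_cap Ss e \in cellseq Ss.
Proof.
elim: Ss e => [|A Ss IH] e.
  by rewrite /signed_cap /= (_ : `I_0 = set0) ?bigcap_set0 ?mem_seq1 //;
     apply/seteqP; split.
rewrite signed_cap_cons /= mem_cat; case: (e 0%N).
  by rewrite (map_f (fun C => C `&` A)) // IH.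
by rewrite (map_f (fun C => C `&` ~` A)) ?orbT // IH.
Qed.

Lemma cells_sub_cellseq Ss : cells Ss `<=` [set` cellseq Ss].
Proof. by move=> _ [_ [e ->]]; exact: signed_cap_in_cellseq. Qed.

End cell_sequence.

Lemma ler_sum_undup (R : numDomainType) (I : eqType) (s : seq I) (F : I -> R) :
  (forall i, 0 <= F i) -> \sum_(i <- undup s) F i <= \sum_(i <- s) F i.
Proof.
move=> F0; elim: s => [|i s IH] //=; rewrite big_cons.
by case: ifP => _; rewrite ?big_cons ?lerD2l // -[X in X <= _]add0r lerD.
Qed.

Lemma norm2_cells_le d (T : measurableType d) (R : realType)
    (lam : set T -> \bar R) (Ss : seq (set T)) :
  norm2 lam (cells Ss) <= \sum_(C <- cellseq Ss) fine (lam C) ^+ 2.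
Proof.
have -> : cells Ss = cells Ss `&` [set` undup (cellseq Ss)].
  apply/seteqP; split => [C CS|C []//]; split => //=.
  by rewrite mem_undup; exact: cells_sub_cellseq.
rewrite /norm2 fsbig_mkcondl -fsbig_seq ?undup_uniq //.
apply: (le_trans _ (ler_sum_undup (cellseq Ss)
  (F := fun C => fine (lam C) ^+ 2) (fun C => sqr_ge0 _))).
by apply: ler_sum => C _; case: ifP => _ //; exact: sqr_ge0.
Qed.

(* [1 / psi c k x = k / c + 1 / x]: the bound after [k] steps of the map
   [x |-> x - x ^+ 2 / c], started at [x]. *)
Definition psi {R : realFieldType} (c k x : R) : R := c * x / (c + k * x).

Section psi_theory.
Variables (R : realFieldType) (c k : R).
Hypotheses (c_gt0 : 0 < c) (k_ge0 : 0 <= k).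

Let c_ge0 : 0 <= c := ltW c_gt0.

Let denom_gt0 {x : R} : 0 <= x -> 0 < c + k * x.
Proof. by move=> x0; rewrite ltr_wpDr ?mulr_ge0. Qed.

Lemma psi_ge0 x : 0 <= x -> 0 <= psi c k x.
Proof.
by move=> x0; rewrite /psi divr_ge0 ?mulr_ge0 ?c_ge0 ?(ltW (denom_gt0 x0)).
Qed.

Lemma psi_homo_le x y : 0 <= x -> x <= y -> psi c k x <= psi c k y.
Proof.
move=> x0 xy; have y0 : 0 <= y by lra.
have Dx := denom_gt0 x0; have Dy := denom_gt0 y0.
rewrite /psi -subr_ge0.
have -> : c * y / (c + k * y) - c * x / (c + k * x) =
    c ^+ 2 * (y - x) / ((c + k * x) * (c + k * y)).
  by field; rewrite !gt_eqF.
by rewrite divr_ge0 ?mulr_ge0 ?subr_ge0 ?sqr_ge0 ?(ltW Dx) ?(ltW Dy).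
Qed.

(* Tangent line of the concave map [psi c k] at [m]; its intercept is
   nonnegative. *)
Lemma psi_le_tangent m x : 0 <= m -> 0 <= x ->
  psi c k x <= c * k * m ^+ 2 / (c + k * m) ^+ 2 + (c / (c + k * m)) ^+ 2 * x.
Proof.
move=> m0 x0; have Dm := denom_gt0 m0; have Dx := denom_gt0 x0.
rewrite /psi -subr_ge0.
have -> : c * k * m ^+ 2 / (c + k * m) ^+ 2 + (c / (c + k * m)) ^+ 2 * x -
    c * x / (c + k * x) =
    c ^+ 2 * k * (x - m) ^+ 2 / ((c + k * m) ^+ 2 * (c + k * x)).
  by field; rewrite !gt_eqF.
exact: divr_ge0 (mulr_ge0 (mulr_ge0 (sqr_ge0 c) k_ge0) (sqr_ge0 _))
  (mulr_ge0 (sqr_ge0 _) (ltW Dx)).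
Qed.

Lemma psi_tangentE m : 0 <= m ->
  psi c k m = c * k * m ^+ 2 / (c + k * m) ^+ 2 + (c / (c + k * m)) ^+ 2 * m.
Proof. by move=> m0; rewrite /psi; field; rewrite gt_eqF ?denom_gt0. Qed.

Lemma psi_step x : 0 <= x -> 0 <= x - x ^+ 2 / c ->
  psi c k (x - x ^+ 2 / c) <= psi c (k + 1) x.
Proof.
move=> x0 h0; have Dh := denom_gt0 h0.
have Dx : 0 < c + (k + 1) * x by rewrite ltr_wpDr ?mulr_ge0 ?addr_ge0.
have Dh' : c * c + k * (x * c - x ^+ 2) != 0.
  rewrite (_ : _ + _ = c * (c + k * (x - x ^+ 2 / c))) ?mulf_neq0 ?gt_eqF //.
  by field; rewrite gt_eqF.
rewrite /psi -subr_ge0.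
have -> : c * x / (c + (k + 1) * x) - c * (x - x ^+ 2 / c) /
    (c + k * (x - x ^+ 2 / c)) =
    x ^+ 3 / ((c + (k + 1) * x) * (c + k * (x - x ^+ 2 / c))).
  by field; rewrite Dh' !gt_eqF.
exact: divr_ge0 (exprn_ge0 _ x0) (mulr_ge0 (ltW Dx) (ltW Dh)).
Qed.

Lemma psi_le_div x B : 0 <= x -> x <= B -> c <= B -> psi c k x <= B / (k + 1).
Proof.
move=> x0 xB cB; have Dx := denom_gt0 x0.
rewrite /psi ler_pdivrMr // mulrAC ler_pdivlMr ?ltr_wpDl //.
have Bc : 0 <= B - c by rewrite subr_ge0.
have Bx : 0 <= B - x by rewrite subr_ge0.
have := mulr_ge0 (mulr_ge0 k_ge0 x0) Bc; have := mulr_ge0 c_ge0 Bx.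
nra.
Qed.

End psi_theory.

Lemma sqr_sum_sqr_div_le (R : realFieldType) (I : Type) (s : seq I) (x : I -> R) :
  (forall i, 0 <= x i) -> 0 < \sum_(i <- s) x i ->
  (\sum_(i <- s) x i ^+ 2) ^+ 2 / \sum_(i <- s) x i <= \sum_(i <- s) x i ^+ 3.
Proof.
move=> x0 S_gt0; set S := \sum_(i <- s) x i; set t := (\sum_(i <- s) x i ^+ 2) / S.
(* Sum [x ^+ 3 - 2 t x ^+ 2 + t ^+ 2 x = x (x - t) ^+ 2 >= 0] at the optimal [t]. *)
have -> : (\sum_(i <- s) x i ^+ 2) ^+ 2 / S =
    \sum_(i <- s) (2 * t * x i ^+ 2 - t ^+ 2 * x i).
  by rewrite sumrB -!mulr_sumr /t -/S; field; rewrite gt_eqF.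
apply: ler_sum => i _; rewrite -subr_ge0.
have -> : x i ^+ 3 - (2 * t * x i ^+ 2 - t ^+ 2 * x i) = x i * (x i - t) ^+ 2.
  by ring.
exact: mulr_ge0 (x0 i) (sqr_ge0 _).
Qed.

(* Nonnegative integrals are suprema over simple minorants, so no
   measurability is needed; the iterated integrals [Eiter] are not known to
   be measurable. *)
Lemma ge0_le_integral_nomeas d (T : measurableType d) (R : realType)
    (mu : {measure set T -> \bar R}) (f g : T -> \bar R) :
  (forall x, 0 <= f x)%E -> (forall x, f x <= g x)%E ->
  (\int[mu]_x f x <= \int[mu]_x g x)%E.
Proof.
move=> f0 fg; have g0 x : (0 <= g x)%E := le_trans (f0 x) (fg x).
rewrite !ge0_integralTE //; apply: ereal_sup_le => _ [h hf <-].
by exists h => // x; exact: le_trans (hf x) (fg x).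
Qed.

Lemma ge0_adde_EFin_sub (R : realDomainType) (x y : \bar R) (a r : R) :
  (0 <= x)%E -> (0 <= y)%E -> 0 < a -> (x + a%:E * y = r%:E)%E ->
  x = (r - a * fine y)%:E.
Proof.
case: x => [x| |] //; case: y => [y| |] //= _ _ a0.
- by move=> [<-]; rewrite addrK.
- by rewrite mulry gtr0_sg // mul1e.
- by rewrite mulry gtr0_sg // mul1e.
Qed.

Section measurable_sum_in.
Context d (T : measurableType d) (R : realType) (I : eqType).

Lemma measurable_sum_in (s : seq I) (f : I -> T -> R) :
  {in s, forall i, measurable_fun setT (f i)} ->
  measurable_fun setT (fun x => \sum_(i <- s) f i x).
Proof.
elim: s => [|i s IH] mf.
  by under eq_fun do rewrite big_nil; exact: measurable_cst.
under eq_fun do rewrite big_cons; apply: measurable_funD.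
  by apply: mf; rewrite mem_head.
by apply: IH => j js; apply: mf; rewrite in_cons js orbT.
Qed.

Lemma ge0_integral_sum_in (mu : {measure set T -> \bar R}) (s : seq I)
    (f : I -> T -> R) :
  {in s, forall i, measurable_fun setT (f i)} -> (forall i x, 0 <= f i x) ->
  (\int[mu]_x (\sum_(i <- s) f i x)%:E = \sum_(i <- s) \int[mu]_x (f i x)%:E)%E.
Proof.
elim: s => [|i s IH] mf f0.
  by under eq_integral do rewrite big_nil; rewrite big_nil integral0.
have mfs : {in s, forall j, measurable_fun setT (f j)}.
  by move=> j js; apply: mf; rewrite in_cons js orbT.
under eq_integral do rewrite big_cons EFinD.
rewrite big_cons -IH // ge0_integralD //.
- by move=> x _; rewrite lee_fin.
- by apply/measurable_EFinP; apply: mf; rewrite mem_head.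
- by move=> x _; rewrite lee_fin sumr_ge0.
- by apply/measurable_EFinP; exact: measurable_sum_in.
Qed.

End measurable_sum_in.

Section probability_psi.
Context d (T : measurableType d) (R : realType) (P : probability T R).

Lemma integral_cst_probability (r : R) : (\int[P]_x r%:E = r%:E)%E.
Proof.
by rewrite -[RHS]mule1 -(probability_setT P) -integral_cst.
Qed.

Lemma integral_psi_le (c k m : R) (X : T -> R) : 0 < c -> 0 <= k ->
  measurable_fun setT X -> (forall x, 0 <= X x) ->
  (\int[P]_x (X x)%:E = m%:E)%E ->
  (\int[P]_x (psi c k (X x))%:E <= (psi c k m)%:E)%E.
Proof.
move=> c0 k0 mX X0 IX.
have m0 : 0 <= m by rewrite -lee_fin -IX integral_ge0 // => x _; rewrite lee_fin.
set a := c * k * m ^+ 2 / (c + k * m) ^+ 2.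
set s := (c / (c + k * m)) ^+ 2.
have a0 : 0 <= a := divr_ge0 (mulr_ge0 (mulr_ge0 (ltW c0) k0) (sqr_ge0 m)) (sqr_ge0 _).
have s0 : 0 <= s := sqr_ge0 _.
apply: (@le_trans _ _ (\int[P]_x (a%:E + s%:E * (X x)%:E))%E).
  apply: ge0_le_integral_nomeas => x; first by rewrite lee_fin psi_ge0.
  by rewrite -EFinM -EFinD lee_fin psi_le_tangent.
have a0E : forall x, [set: T] x -> (0 <= a%:E)%E by move=> x _; rewrite lee_fin.
have sX0 : forall x, [set: T] x -> (0 <= s%:E * (X x)%:E)%E.
  by move=> x _; rewrite -EFinM lee_fin mulr_ge0.
have mX' : measurable_fun setT (fun x => (X x)%:E) by exact/measurable_EFinP.
rewrite (ge0_integralD _ _ a0E (measurable_cst _) sX0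
  (emeasurable_funM (measurable_cst _) mX')) //.
rewrite ge0_integralZl_EFin // => [|x _]; last by rewrite lee_fin.
by rewrite integral_cst_probability IX -EFinM -EFinD -psi_tangentE.
Qed.
End probability_psi.

Section random_cells.
Context d (T : measurableType d) (R : realType).
Variable lam : {finite_measure set T -> \bar R}.
Context dO (O : measurableType dO) (P : probability O R) (RS : O -> set T).
Hypothesis RS_meas : measurable [set p : O * T | RS p.1 p.2].

Let L (A : set T) := fine (lam A).

Lemma fine_measure_ge0 A : 0 <= L A.
Proof. exact: fine_ge0 (measure_ge0 _ _). Qed.

Lemma fine_measureE A : measurable A -> (L A)%:E = lam A.
Proof. by move=> mA; rewrite fineK // fin_num_measure. Qed.

Lemma fine_measureIC C S : measurable C -> measurable S ->
  L (C `&` S) + L (C `&` ~` S) = L C.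
Proof.
move=> mC mS; have mCS : measurable (C `&` S) by exact: measurableI.
have mCS' : measurable (C `&` ~` S) by exact/measurableI/measurableC.
apply: EFin_inj; rewrite EFinD !fine_measureE // -measureU //.
  by rewrite -setIUr setUv setIT.
by rewrite setIACA setICr setI0.
Qed.

Lemma measurable_cellseq Ss : {in Ss, forall A : set T, measurable A} ->
  {in cellseq Ss, forall C : set T, measurable C}.
Proof.
elim: Ss => [_ C|S Ss IH mSs C] /=; first by rewrite mem_seq1 => /eqP ->.
have mS : measurable S by apply: mSs; rewrite mem_head.
have {}IH : {in cellseq Ss, forall C : set T, measurable C}.
  by apply: IH => A As; apply: mSs; rewrite in_cons As orbT.
rewrite mem_cat => /orP[] /mapP[C' /IH mC' ->]; first exact: measurableI.
exact/measurableI/measurableC.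
Qed.

Lemma sum_cellseq Ss : {in Ss, forall A : set T, measurable A} ->
  \sum_(C <- cellseq Ss) L C = L setT.
Proof.
elim: Ss => [|S Ss IH] mSs /=; first by rewrite big_seq1.
have mS : measurable S by apply: mSs; rewrite mem_head.
have mSs' : {in Ss, forall A : set T, measurable A}.
  by move=> A As; apply: mSs; rewrite in_cons As orbT.
rewrite big_cat /= !big_map -big_split /= -(IH mSs') !big_seq.
by apply: eq_bigr => C /(measurable_cellseq mSs') mC; exact: fine_measureIC.
Qed.

Let E := [set p : O * T | RS p.1 p.2].

Lemma measurable_RS w : measurable (RS w).
Proof.
rewrite (_ : RS w = xsection E w); first exact: measurable_xsection.
by apply/seteqP; split => x; rewrite /xsection /= inE.
Qed.

Lemma measurable_RS_cons w Ss : {in Ss, forall A : set T, measurable A} ->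
  {in RS w :: Ss, forall A : set T, measurable A}.
Proof. by move=> mSs A; rewrite inE => /orP[/eqP ->|/mSs //]; exact: measurable_RS. Qed.

Lemma measurable_fun_fine_xsection (S : set (O * T)) : measurable S ->
  measurable_fun setT (fun w => L (xsection S w)).
Proof.
move=> mS; apply/measurable_EFinP.
rewrite (_ : _ \o _ = lam \o xsection S); first exact: measurable_fun_xsection.
by apply/funext => w /=; rewrite fine_measureE //; exact: measurable_xsection.
Qed.

Lemma measurable_fun_IRS C : measurable C ->
  measurable_fun setT (fun w => L (C `&` RS w)).
Proof.
move=> mC; rewrite (_ : (fun w => _) = fun w => L (xsection (E `&` (setT `*` C)) w)).
  by apply/measurable_fun_fine_xsection/measurableI => //; exact: measurableX.
apply/funext => w; congr L; apply/seteqP; split => x; rewrite /xsection /= inE /=.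
  by move=> [? ?].
by move=> [? [? ?]].
Qed.

Lemma measurable_fun_ICRS C : measurable C ->
  measurable_fun setT (fun w => L (C `&` ~` RS w)).
Proof.
move=> mC; rewrite (_ : (fun w => _) = fun w => L (xsection (~` E `&` (setT `*` C)) w)).
  apply/measurable_fun_fine_xsection/measurableI; first exact: measurableC.
  exact: measurableX.
apply/funext => w; congr L; apply/seteqP; split => x; rewrite /xsection /= inE /=.
  by move=> [? ?].
by move=> [? [? ?]].
Qed.

Variable alpha : R.
Hypothesis alpha_gt0 : 0 < alpha.
Hypothesis shatter : forall A : set T, measurable A ->
  L A ^+ 3 <= 2 * alpha * fine (\int[P]_w (L (A `&` RS w) * L (A `&` ~` RS w))%:E)%E.

Let split_sq C w := L (C `&` RS w) ^+ 2 + L (C `&` ~` RS w) ^+ 2.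

Lemma measurable_fun_split_sq C : measurable C -> measurable_fun setT (split_sq C).
Proof.
move=> mC; apply: measurable_funD; apply: measurable_funX;
  [exact: measurable_fun_IRS | exact: measurable_fun_ICRS].
Qed.

Lemma integral_split_sq_le C : measurable C ->
  (\int[P]_w (split_sq C w)%:E <= (L C ^+ 2 - L C ^+ 3 / alpha)%:E)%E.
Proof.
move=> mC; set I1 := (\int[P]_w _)%E.
set I2 := (\int[P]_w (L (C `&` RS w) * L (C `&` ~` RS w))%:E)%E.
have L_ge0 := fine_measure_ge0.
have mI := measurable_fun_IRS mC; have mIC := measurable_fun_ICRS mC.
(* [(a + b) ^+ 2 = a ^+ 2 + b ^+ 2 + 2 a b] with [a + b = L C] *)
have I12 : (I1 + 2%:E * I2 = (L C ^+ 2)%:E)%E.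
  rewrite /I2 -ge0_integralZl_EFin //; last 2 first.
  - by move=> w _; rewrite lee_fin mulr_ge0.
  - exact/measurable_EFinP/measurable_funM.
  rewrite /I1 -ge0_integralD //; first last.
  - by apply/emeasurable_funM/measurable_EFinP/measurable_funM.
  - by move=> w _; rewrite mule_ge0 // lee_fin mulr_ge0.
  - exact/measurable_EFinP/measurable_fun_split_sq.
  - by move=> w _; rewrite lee_fin addr_ge0 // sqr_ge0.
  rewrite -[RHS](integral_cst_probability P); apply: eq_integral => w _.
  rewrite -EFinM -EFinD -(fine_measureIC mC (measurable_RS w)); congr (_%:E).
  by rewrite /split_sq; ring.
rewrite (ge0_adde_EFin_sub _ _ _ I12) ?integral_ge0 // => [|w _|w _]; first last.
- by rewrite lee_fin mulr_ge0.
- by rewrite lee_fin addr_ge0 // sqr_ge0.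
rewrite lee_fin lerD2l lerN2 ler_pdivrMr // mulrAC.
exact: shatter.
Qed.

Let sum_sq Ss := \sum_(C <- cellseq Ss) L C ^+ 2.

Lemma sum_sq_ge0 Ss : 0 <= sum_sq Ss.
Proof. by apply: sumr_ge0 => C _; exact: sqr_ge0. Qed.

Lemma sum_sq_cons w Ss :
  sum_sq (RS w :: Ss) = \sum_(C <- cellseq Ss) split_sq C w.
Proof. by rewrite /sum_sq big_cat /= !big_map -big_split. Qed.

Lemma measurable_fun_sum_sq Ss : {in Ss, forall A : set T, measurable A} ->
  measurable_fun setT (fun w => sum_sq (RS w :: Ss)).
Proof.
move=> mSs; under eq_fun do rewrite sum_sq_cons.
apply: measurable_sum_in => C /(measurable_cellseq mSs).
exact: measurable_fun_split_sq.
Qed.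

Lemma integral_sum_sq_le Ss : {in Ss, forall A : set T, measurable A} ->
  0 < L setT ->
  (\int[P]_w (sum_sq (RS w :: Ss))%:E <=
   (sum_sq Ss - sum_sq Ss ^+ 2 / (alpha * L setT))%:E)%E.
Proof.
move=> mSs Lpos; under eq_integral do rewrite sum_sq_cons.
rewrite ge0_integral_sum_in; last 2 first.
- by move=> C /(measurable_cellseq mSs); exact: measurable_fun_split_sq.
- by move=> C w; rewrite addr_ge0 // sqr_ge0.
apply: (@le_trans _ _ (\sum_(C <- cellseq Ss) (L C ^+ 2 - L C ^+ 3 / alpha)%:E)%E).
  rewrite !big_seq; apply: lee_sum => C /(measurable_cellseq mSs).
  exact: integral_split_sq_le.
rewrite sumEFin lee_fin sumrB -mulr_suml lerD2l lerN2 invfM mulrA.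
rewrite mulrAC ler_pM2r ?invr_gt0 // -(sum_cellseq mSs).
apply: sqr_sum_sqr_div_le => [C|]; first exact: fine_measure_ge0.
by rewrite sum_cellseq.
Qed.

Lemma Eiter_ge0 k Ss : (0 <= Eiter P RS lam k Ss)%E.
Proof.
elim: k Ss => [|k IH] Ss /=; last by apply: integral_ge0 => w _; exact: IH.
by rewrite lee_fin; apply: fsumr_ge0 => C _; exact: sqr_ge0.
Qed.

Lemma Eiter_le_psi k Ss : {in Ss, forall A : set T, measurable A} ->
  0 < L setT ->
  (Eiter P RS lam k Ss <= (psi (alpha * L setT) k%:R (sum_sq Ss))%:E)%E.
Proof.
move=> mSs Lpos; set c := alpha * L setT; have c_gt0 : 0 < c by exact: mulr_gt0.
elim: k Ss mSs => [|k IH] Ss mSs /=.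
  by rewrite lee_fin /psi mul0r addr0 mulrAC divff ?mul1r ?gt_eqF // norm2_cells_le.
set X := fun w => sum_sq (RS w :: Ss).
have IX := integral_sum_sq_le mSs Lpos; rewrite -/X -/c in IX.
have [m Xm] : exists m, (\int[P]_w (X w)%:E = m%:E)%E.
  exists (fine (\int[P]_w (X w)%:E)%E); rewrite fineK // ge0_fin_numE.
    by rewrite (le_lt_trans IX) ?ltey.
  by apply: integral_ge0 => w _; rewrite lee_fin sum_sq_ge0.
have m0 : 0 <= m.
  by rewrite -lee_fin -Xm integral_ge0 // => w _; rewrite lee_fin sum_sq_ge0.
have mle : m <= sum_sq Ss - sum_sq Ss ^+ 2 / c by rewrite -lee_fin -Xm.
apply: (@le_trans _ _ (\int[P]_w (psi c k%:R (X w))%:E)%E).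
  apply: ge0_le_integral_nomeas => w; first exact: Eiter_ge0.
  exact/IH/measurable_RS_cons.
have k0 : 0 <= k%:R :> R by [].
apply: le_trans (integral_psi_le c_gt0 k0 (measurable_fun_sum_sq mSs)
  (fun w => sum_sq_ge0 _) Xm) _.
rewrite lee_fin -natr1; apply: le_trans (psi_homo_le c_gt0 k0 m0 mle) _.
by apply: psi_step => //; [exact: sum_sq_ge0 | exact: le_trans mle].
Qed.

Lemma Eiter_le0 k Ss : {in Ss, forall A : set T, measurable A} ->
  L setT = 0 -> (Eiter P RS lam k Ss <= 0)%E.
Proof.
move=> mSs L0; elim: k Ss mSs => [|k IH] Ss mSs /=.
  rewrite lee_fin; apply: le_trans (norm2_cells_le lam Ss) _.
  rewrite big_seq big1 // => C /(measurable_cellseq mSs) mC.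
  have : L C <= L setT by rewrite -lee_fin !fine_measureE // le_measure ?inE.
  rewrite L0 => LC0; rewrite -/(L C) (_ : L C = 0) ?expr0n //.
  by apply/eqP; rewrite eq_le LC0 fine_measure_ge0.
apply: (@le_trans _ _ (\int[P]_w (cst 0%E w))%E); last by rewrite integral0.
apply: ge0_le_integral_nomeas => w; first exact: Eiter_ge0.
exact/IH/measurable_RS_cons.
Qed.

End random_cells.

Theorem lemma7p1 (R : realType) (M : completePseudoMetricType R)
  (HM : hausdorff_space M) (Hsep : separable_space M)
  (lam : {finite_measure set (borel_of M) -> \bar R})
  (dO : measure_display) (O : measurableType dO) (P : probability O R)
  (RS : O -> set (borel_of M))
  (RS_meas : measurable [set p : O * borel_of M | RS p.1 p.2])
  (RS_sym : forall (n : nat) (x : 'I_n -> borel_of M) (b : 'I_n -> bool),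
      P [set w | forall i, (x i \in RS w) = b i] =
      P [set w | forall i, (x i \in ~` RS w) = b i])
  (alpha : R) (alpha_gt0 : 0 < alpha)
  (shatter : forall A : set (borel_of M), measurable A ->
      (fine (lam A)) ^+ 3 <=
      2 * alpha * fine (\int[P]_w ((fine (lam (A `&` RS w)) *
                                    fine (lam (A `&` ~` RS w)))%:E)%E))
  (k : nat) (k_ge1 : (1 <= k)%N) :
  (Eiter P RS lam k [::] <=
   (Num.max (fine (lam setT) ^+ 2) (2 * alpha * fine (lam setT))
      / k.+1%:R)%:E)%E.
Proof.
set Lam := fine (lam setT).
have no_sets : {in [::], forall A : set (borel_of M), measurable A} by [].
have [Lam_gt0|] := ltP 0 Lam; last first.
  rewrite le_eqVlt ltNge fine_measure_ge0 orbF => /eqP Lam0.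
  apply: le_trans (Eiter_le0 P RS_meas k no_sets Lam0) _.
  by rewrite lee_fin divr_ge0 // le_max sqr_ge0.
apply: le_trans (Eiter_le_psi RS_meas alpha_gt0 shatter k no_sets Lam_gt0) _.
rewrite lee_fin /= big_seq1 -/Lam -[k.+1%:R]natr1 psi_le_div ?mulr_gt0 ?sqr_ge0 //.
  by rewrite le_max lexx.
rewrite le_max -mulrA ler_peMl ?orbT //; last by rewrite ler1n.
by rewrite mulr_ge0 ?ltW.
Qed.
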